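(* Let $A,B,C\in\mathbb{C}$ be the vertices of a nondegenerate counterclockwise triangle. Define $$P_1=A+\rho(C-A),\qquad P_2=A+\rho^{-1}(B-A),$$ $$X=P_2+\rho^{-1}(A-P_2),\qquad Y=P_2+\rho(P_1-P_2).$$ Let $M=(B+C)/2$. Let $\Gamma$ be the circumcircle of the equilateral triangle with side $BM$ whose third vertex lies on the same side of line $BC$ as $A$. Let $\sigma$ be the signed area of the ordered triangle $F_2=(P_2,Y,X)$, positive for counterclockwise. Then: - $\sigma>0$ if $A$ lies outside $\Gamma$; - $\sigma=0$ (the three vertices of $F_2$ are collinear) if $A$ lies on $\Gamma$; - $\sigma<0$ if $A$ lies inside $\Gamma$.
   Context: The plane is identified with $\mathbb{C}$, and $\rho=e^{2\pi i/3}$. Geometric meaning of the construction: - $H_1$ is the regular hexagon erected outwardly on $AC$, and $H_2$ the one erected outwardly on $AB$. - $P_1$ and $P_2$ are the vertices adjacent to $A$, other than $C$ resp. $B$, of $H_1$ resp. $H_2$. - $F_1=(A,P_1,P_2)$ is the flank triangle between $H_1$ and $H_2$. - $X$ is the vertex of $H_2$ adjacent to $P_2$ other than $A$. - $Y$ is the vertex adjacent to $P_2$, other than $P_1$, of the regular hexagon $H_3$ erected on the side $P_1P_2$ of $F_1$. - $F_2$ is the flank triangle between $H_2$ and $H_3$. *)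

From HB Require Import structures.
From mathcomp Require Import all_boot all_order all_algebra.
From mathcomp Require Import complex.
Set Implicit Arguments. Unset Strict Implicit. Unset Printing Implicit Defensive.
Import Order.TTheory GRing.Theory Num.Theory.
Local Open Scope ring_scope.
Local Open Scope complex_scope.

(* rho = e^{2 pi i/3} = -1/2 + i sqrt(3)/2 *)
Definition rho (R : rcfType) : R[i] := (- (1/2)) +i* (Num.sqrt 3 / 2).

Definition cross (R : rcfType) (u v : R[i]) : R := complex.Re u * complex.Im v - complex.Im u * complex.Re v.

Definition signed_area (R : rcfType) (p q r : R[i]) : R := cross (q - p) (r - p) / 2.

Definition dist2 (R : rcfType) (z w : R[i]) : R := complex.Re (z - w) ^+ 2 + complex.Im (z - w) ^+ 2.

Definition equilateral (R : rcfType) (x y z : R[i]) : Prop :=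
  dist2 x y = dist2 y z /\ dist2 y z = dist2 z x.

Definition same_side (R : rcfType) (x y p q : R[i]) : Prop :=
  0 < signed_area x y p * signed_area x y q.

From HB Require Import structures.
From mathcomp Require Import all_boot all_order all_algebra.
From mathcomp Require Import complex.
From mathcomp Require Import ring lra.
Set Implicit Arguments. Unset Strict Implicit. Unset Printing Implicit Defensive.
Import Order.TTheory GRing.Theory Num.Theory.
Local Open Scope ring_scope.
Local Open Scope complex_scope.

(* Put the origin at B and write d = M - B = (C - B)/2,
   e = A - B, w = O - B.  Decomposing vectors in the orthogonal frame
   (d, i d) turns every hypothesis into a statement about the two scalars
   dot(., d) and cross(d, .):
   - the apex T of the counterclockwise equilateral triangle on BM satisfies
     dot(T-B, d) = |d|^2/2 and cross(d, T-B) = sqrt3 |d|^2/2;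
   - hence its circumcenter satisfies dot(w, d) = |d|^2/2 and
     sqrt3 cross(d, w) = |d|^2/2;
   - hence the power of A with respect to Gamma is, up to the factor sqrt3,
     sqrt3 |e|^2 - sqrt3 dot(e, d) - cross(d, e).
   A direct computation with rho = (-1 + i sqrt3)/2 shows that twice the
   signed area of F2 is the same expression, so
       2 sigma = sqrt3 (|A - O|^2 - |B - O|^2),
   and the trichotomy follows from sqrt3 > 0. *)

Section FlankTriangle.

Variable R : rcfType.

Local Notation s := (Num.sqrt 3 : R).

Lemma sqrt3_sqr : s ^+ 2 = 3.
Proof. by rewrite sqr_sqrtr // ler0n. Qed.

Lemma sqrt3_gt0 : 0 < s.
Proof. by rewrite sqrtr_gt0 ltr0n. Qed.

(* rho is a unit complex number, so its inverse is its conjugate. *)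
Lemma rhoV : (rho R)^-1 = (- (1/2)) +i* (- (s / 2)).
Proof.
have rho_neq0 : rho R != 0.
  rewrite eq_complex /= negb_and; apply/orP; left.
  by rewrite oppr_eq0 mulf_eq0 oner_eq0 invr_eq0 pnatr_eq0.
apply: (mulfI rho_neq0); rewrite mulfV //.
apply/eqP; rewrite eq_complex /=; apply/andP; split; apply/eqP; last by field.
have -> : - (1/2) * - (1/2) - s / 2 * - (s / 2) = 1/4 + s ^+ 2 / 4 :> R by field.
by rewrite sqrt3_sqr; field.
Qed.

Lemma half_complex (x : R[i]) : x / 2 = (complex.Re x / 2) +i* (complex.Im x / 2).
Proof.
apply: (mulIf (_ : (2 : R[i]) != 0)); first by rewrite pnatr_eq0.
rewrite mulfVK ?pnatr_eq0 //.
by case: x => a b; apply/eqP; rewrite eq_complex /=; apply/andP; split; apply/eqP; field.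
Qed.

Definition norm2 (u : R[i]) : R := complex.Re u ^+ 2 + complex.Im u ^+ 2.

Definition dot (u v : R[i]) : R := complex.Re u * complex.Re v + complex.Im u * complex.Im v.

Lemma dist2E (z w : R[i]) : dist2 z w = norm2 (z - w).
Proof. by []. Qed.

Lemma dist2C (z w : R[i]) : dist2 z w = dist2 w z.
Proof. by case: z => ? ?; case: w => ? ?; rewrite /dist2 /=; ring. Qed.

Lemma dist2_shift (c z w : R[i]) : dist2 z w = norm2 ((z - c) - (w - c)).
Proof. by rewrite dist2E; congr norm2; ring. Qed.

Lemma norm2_sub (u v : R[i]) : norm2 (u - v) = norm2 u - 2 * dot u v + norm2 v.
Proof. by case: u => ? ?; case: v => ? ? /=; rewrite /norm2 /dot /=; ring. Qed.

Lemma dot_self (u : R[i]) : dot u u = norm2 u.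
Proof. by rewrite /dot /norm2 !expr2. Qed.

Lemma norm2_ge0 (u : R[i]) : 0 <= norm2 u.
Proof. by rewrite /norm2 addr_ge0 // sqr_ge0. Qed.

(* Coordinates of v and w in the orthogonal frame (u, i u): the scalar
   product of v and w, scaled by |u|^2, splits along the two axes. *)
Lemma frame_dot (u v w : R[i]) :
  norm2 u * dot v w = dot v u * dot w u + cross u v * cross u w.
Proof. by case: u => ? ?; case: v => ? ?; case: w => ? ?; rewrite /norm2 /dot /cross /=; ring. Qed.

Lemma equilateral_apex (d t : R[i]) :
  norm2 t = norm2 d -> norm2 (t - d) = norm2 d -> 0 < cross d t ->
  [/\ dot t d = norm2 d / 2, cross d t = s * norm2 d / 2 & 0 < norm2 d].
Proof.
move=> t_len td_len t_ccw.
have hdot : dot t d = norm2 d / 2 by move: td_len; rewrite norm2_sub t_len; lra.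
have lagrange := frame_dot d t t.
rewrite dot_self hdot t_len in lagrange.
have hn := norm2_ge0 d.
have s_gt0 := sqrt3_gt0.
have hcross : cross d t = s * norm2 d / 2.
  apply/eqP; rewrite -(@eqrXn2 _ 2) //; [apply/eqP | exact: ltW | nra].
  by rewrite !exprMn sqrt3_sqr; nra.
by split=> //; move: t_ccw; rewrite hcross; nra.
Qed.

Lemma equilateral_circumcenter (d t w : R[i]) :
  dot t d = norm2 d / 2 -> cross d t = s * norm2 d / 2 -> norm2 t = norm2 d ->
  0 < norm2 d -> norm2 (w - d) = norm2 w -> norm2 (w - t) = norm2 w ->
  dot w d = norm2 d / 2 /\ s * cross d w = norm2 d / 2.
Proof.
move=> td ct t_len n_gt0 wd_len wt_len.
have hwd : dot w d = norm2 d / 2 by move: wd_len; rewrite norm2_sub; lra.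
have hwt : dot w t = norm2 d / 2 by move: wt_len; rewrite norm2_sub t_len; lra.
split=> //; apply: (mulfI (lt0r_neq0 n_gt0)).
by have := frame_dot d w t; rewrite hwd hwt td ct; nra.
Qed.

Lemma power_in_frame (d w e : R[i]) :
  0 < norm2 d -> dot w d = norm2 d / 2 -> s * cross d w = norm2 d / 2 ->
  s * (norm2 (e - w) - norm2 w) = s * norm2 e - s * dot e d - cross d e.
Proof.
move=> n_gt0 wd cw; rewrite norm2_sub; apply: (mulfI (lt0r_neq0 n_gt0)).
have frame := frame_dot d e w; rewrite wd in frame.
have -> : norm2 d * (s * (norm2 e - 2 * dot e w + norm2 w - norm2 w))
        = s * norm2 d * norm2 e - 2 * s * (norm2 d * dot e w) by ring.
rewrite frame.
have -> : 2 * s * (dot e d * (norm2 d / 2) + cross d e * cross d w)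
        = s * norm2 d * dot e d + 2 * cross d e * (s * cross d w) by field.
by rewrite cw; field.
Qed.

Lemma signed_area_rot (A B C : R[i]) : signed_area B C A = signed_area A B C.
Proof.
by case: A => ? ?; case: B => ? ?; case: C => ? ?; rewrite /signed_area /cross /=; ring.
Qed.

Lemma signed_area_half (B C T : R[i]) : signed_area B C T = cross ((C - B) / 2) (T - B).
Proof.
rewrite half_complex; case: B => ? ?; case: C => ? ?; case: T => ? ?.
by rewrite /signed_area /cross /=; field.
Qed.

Lemma flank_area (A B C : R[i]) :
  let P1 := A + rho R * (C - A) in
  let P2 := A + (rho R)^-1 * (B - A) in
  let X := P2 + (rho R)^-1 * (A - P2) in
  let Y := P2 + rho R * (P1 - P2) in
  2 * signed_area P2 Y X
    = s * norm2 (A - B) - s * dot (A - B) ((C - B) / 2) - cross ((C - B) / 2) (A - B).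
Proof.
rewrite /= rhoV half_complex.
case: A => ? ?; case: B => ? ?; case: C => ? ?.
rewrite /signed_area /cross /norm2 /dot /rho /=.
by field: sqrt3_sqr.
Qed.

End FlankTriangle.

Theorem mainTheorem3 (R : rcfType) (A B C T O : R[i]) :
  0 < signed_area A B C ->
  let P1 := A + rho R * (C - A) in
  let P2 := A + (rho R)^-1 * (B - A) in
  let X := P2 + (rho R)^-1 * (A - P2) in
  let Y := P2 + rho R * (P1 - P2) in
  let M := (B + C) / 2 in
  equilateral B M T -> same_side B C T A ->
  dist2 O B = dist2 O M -> dist2 O M = dist2 O T ->
  let sigma := signed_area P2 Y X in
  (dist2 A O > dist2 B O -> 0 < sigma) /\
  (dist2 A O = dist2 B O -> sigma = 0) /\
  (dist2 A O < dist2 B O -> sigma < 0).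
Proof.
move=> ABC_ccw P1 P2 X Y M [BM_MT MT_TB] same_TA OB_OM OM_OT sigma.
have half_BC : M - B = (C - B) / 2 by rewrite /M; field.
have sigmaE : 2 * sigma = Num.sqrt 3 * (dist2 A O - dist2 B O).
  have T_ccw : 0 < cross (M - B) (T - B).
    move: same_TA; rewrite half_BC -signed_area_half /same_side.
    by rewrite [signed_area B C A]signed_area_rot pmulr_lgt0.
  have tB : norm2 (T - B) = norm2 (M - B) by rewrite -!dist2E -MT_TB -BM_MT dist2C.
  have tM : norm2 ((T - B) - (M - B)) = norm2 (M - B).
    by rewrite -(dist2_shift B) -dist2E dist2C MT_TB.
  have wM : norm2 ((O - B) - (M - B)) = norm2 (O - B) by rewrite -(dist2_shift B) -dist2E OB_OM.
  have wT : norm2 ((O - B) - (T - B)) = norm2 (O - B).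
    by rewrite -(dist2_shift B) -dist2E -OM_OT OB_OM.
  have [td ct n_gt0] := equilateral_apex tB tM T_ccw.
  have [wd cw] := equilateral_circumcenter td ct tB n_gt0 wM wT.
  rewrite (flank_area A B C : 2 * sigma = _) -half_BC -(power_in_frame (A - B) n_gt0 wd cw).
  by rewrite -(dist2_shift B) [dist2 B O]dist2C.
have s_gt0 : 0 < Num.sqrt 3 :> R := @sqrt3_gt0 R.
by split; [|split] => h; nra.
Qed.
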